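(* Let $\mathcal{F}=(W,R)$ be a finite transitive frame and let $X_\mathcal{F}$ and $f:X_\mathcal{F}\to W$ be constructed as described in the context (for any admissible choice of the spaces $X_C$). Then $f$ is a $d$-morphism from $X_\mathcal{F}$ onto $\mathcal{F}$.
   Context: For a topological space $X$ and $Y\subseteq X$: $\mathrm{cl}_X Y$ is the closure; a point $x$ is a limit point of $Y$ if every set $O-\{x\}$ with $O$ an open neighbourhood of $x$ meets $Y$; $\mathrm{d}_X Y$ (the derived set) is the set of limit points of $Y$. $Y$ is dense in $X$ if $\mathrm{cl}_XY=X$. A subset $S$ is crowded in $X$ if $S\subseteq \mathrm{d}_X S$ (i.e. $S$ has no isolated points as a subspace). A partition of $X$ into cells is dense (resp. crowded) if every cell is dense in $X$ (resp. crowded). Frames: $\mathcal{F}=(W,R)$ with $R$ transitive. $R^*$ is the reflexive closure of $R$. A cluster is an equivalence class of the relation $\{(x,y): x=y \text{ or } xRyRx\}$; the cluster of $x$ is $C_x$. A cluster $C_x$ is degenerate if $x$ is irreflexive (then $C_x=\{x\}$), otherwise non-degenerate. $R$ lifts to clusters by $C_xRC_y$ iff $xRy$. Write $CR^{\uparrow}C'$ if $CRC'$ but not $C'RC$. The Alexandrov space $W_R$ is $W$ with topology whose open sets are the $R$-up-sets (sets $O$ with $w\in O, wRv\Rightarrow v\in O$). A $d$-morphism from a space $X$ to a transitive frame $\mathcal{F}=(W,R)$ is a function $f:X\to W$ such that (i) $f$ is continuous and open as a map $X\to W_R$; (ii) if $w$ is $R$-reflexive then $f^{-1}\{w\}$ is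 crowded in $X$; (iii) if $w$ is $R$-irreflexive then $f^{-1}\{w\}\cap \mathrm{d}_X f^{-1}\{w\}=\emptyset$. Construction of $X_\mathcal{F}$: let $\mathcal{F}=(W,R)$ be finite transitive with set of clusters $\mathscr{C}$. For each $C\in\mathscr{C}$ choose a space $X_C$ with a partition $\{X_w:w\in C\}$: if $C=\{w\}$ is degenerate, $X_C=X_w=\{w\}$ (one-point space); if $C=\{w_1,\dots,w_k\}$ is non-degenerate, $X_C$ is a space with a crowded dense $k$-partition whose cells are labelled $X_{w_1},\dots,X_{w_k}$. The $X_C$ are pairwise disjoint. Let $X_\mathcal{F}=\bigcup_{C\in\mathscr{C}}X_C$, where $O\subseteq X_\mathcal{F}$ is open iff for every $C\in\mathscr{C}$, $O\cap X_C$ is open in $X_C$, and if $O\cap X_C\neq\emptyset$ then $X_{C'}\subseteq O$ for every $C'$ with $CR^\uparrow C'$. Define $f:X_\mathcal{F}\to W$ by $f(x)=w$ iff $x\in X_w$. *)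

From HB Require Import structures.
From mathcomp Require Import all_boot all_order all_algebra.
From mathcomp Require Import all_classical topology.

Set Implicit Arguments.
Unset Strict Implicit.
Unset Printing Implicit Defensive.

Local Open Scope classical_set_scope.

Section Clusters.
Variables (W : finType) (R : rel W).

Definition cluster_of (w : W) : {set W} :=
  [set v | (v == w) || (R w v && R v w)].

Definition clusters := {C : {set W} | [exists w, C == cluster_of w]}.

Definition clR (C C' : clusters) : bool :=
  [exists x in val C, exists y in val C', R x y].

Definition clRup (C C' : clusters) : bool := clR C C' && ~~ clR C' C.

Definition degenerate (C : clusters) : Prop :=
  exists w, val C = cluster_of w /\ ~~ R w w.

End Clusters.

Section XF.
Variables (W : finType) (R : rel W) (X : clusters R -> topologicalType).

Definition XF_type := {C : clusters R & X C}.

HB.instance Definition _ := Choice.on XF_type.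

Definition XF_open (O : set XF_type) : Prop :=
  forall C : clusters R,
    open (fun x : X C => O (existT _ C x)) /\
    ((exists x : X C, O (existT _ C x)) ->
       forall C' : clusters R, clRup C C' -> forall x' : X C', O (existT _ C' x')).

Lemma XF_openT : XF_open setT.
Proof. move=> C; split; first exact: openT. by move=> _ C2 _ x2. Qed.

Lemma XF_openI : setI_closed XF_open.
Proof.
move=> A B oA oB C; have [oAC uA] := oA C; have [oBC uB] := oB C; split.
  exact: (@openI _ (fun x : X C => A (existT _ C x)) (fun x => B (existT _ C x))).
move=> [x [Ax Bx]] C' CC' x'; split.
  by apply: uA => //; exists x.
by apply: uB => //; exists x.
Qed.

Lemma XF_op_bigU (I : Type) (f : I -> set XF_type) :
  (forall i, XF_open (f i)) -> XF_open (\bigcup_i f i).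
Proof.
move=> hf C; split.
  have -> : (fun x : X C => (\bigcup_i f i) (existT _ C x)) =
            \bigcup_i (fun x : X C => f i (existT _ C x)).
    by rewrite funeqE => x; apply: propext; split; move=> [i _ H]; exists i.
  by apply: bigcup_open => i _; have [] := hf i C.
move=> [x [i _ fx]] C' CC' x'; exists i => //.
have [_ u] := hf i C; apply: u => //; by exists x.
Qed.

HB.instance Definition _ := isOpenTopological.Build XF_type
  XF_openT XF_openI XF_op_bigU.

End XF.

(** Up-sets of R, i.e. the open sets of the Alexandrov space W_R. *)
Definition Rupset (W : Type) (R : rel W) (U : set W) : Prop :=
  forall w v, U w -> R w v -> U v.

(** f : T -> W is a d-morphism from the space T to the transitive frame (W,R):
    (i) f is continuous and open as a map T -> W_R;
    (ii) fibres of reflexive points are crowded (S ⊆ d S);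
    (iii) fibres of irreflexive points satisfy S ∩ d S = ∅. *)
Definition d_morphism (T : topologicalType) (W : Type) (R : rel W)
    (f : T -> W) : Prop :=
  [/\ (forall U : set W, Rupset R U -> open (f @^-1` U)),
      (forall O : set T, open O -> Rupset R (f @` O)),
      (forall w : W, R w w ->
         f @^-1` [set w] `<=` limit_point (f @^-1` [set w]))
    & (forall w : W, ~~ R w w ->
         f @^-1` [set w] `&` limit_point (f @^-1` [set w]) = set0)].

From HB Require Import structures.
From mathcomp Require Import all_boot all_order all_algebra.
From mathcomp Require Import all_classical topology.

(* Two labels in one cluster are equal or R-related both ways, so an up-set
   of W_R pulls back to a set meeting each X_C in nothing or everything; the
   second clause of the topology of X_F then makes the labelling continuous.
   For openness, a point of an open O labelled w reaches an R-successor v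
   either inside its own cluster, where the cell of v is dense, or in an
   R^up-later cluster, which O contains entirely. Since X_C embeds
   continuously into X_F, reflexive fibres inherit crowdedness from the
   cells; an irreflexive point forms a degenerate cluster, so its fibre is a
   single point. *)

Local Open Scope classical_set_scope.

Section Clusters.
Context {W : finType} {R : rel W}.
Hypothesis Rtrans : transitive R.

Lemma cluster_ofP w v :
  reflect (v = w \/ R w v /\ R v w) (v \in cluster_of R w).
Proof. by rewrite inE; apply: (iffP orP) => -[/eqP|/andP]; auto. Qed.

Lemma cluster_of_self w : w \in cluster_of R w.
Proof. by apply/cluster_ofP; left. Qed.

Lemma cluster_of_eq {w v} : v \in cluster_of R w -> cluster_of R v = cluster_of R w.
Proof.
move=> /cluster_ofP [->//|[wv vw]]; apply/setP => u.
apply/cluster_ofP/cluster_ofP => -[->|[]]; rewrite ?vw ?wv; auto.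
- by move=> vu uv; right; split; [apply: (Rtrans v) | apply: (Rtrans v)].
- by move=> wu uw; right; split; [apply: (Rtrans w) | apply: (Rtrans w)].
Qed.

Lemma clusterE {C : clusters R} {w} : w \in val C -> val C = cluster_of R w.
Proof. by case: C => C /= /existsP[x /eqP ->] /cluster_of_eq ->. Qed.

Lemma cluster_unique {C C' : clusters R} {w} :
  w \in val C -> w \in val C' -> C = C'.
Proof. by move=> /clusterE wC /clusterE wC'; apply: val_inj; rewrite wC wC'. Qed.

Definition cluster_at (w : W) : clusters R :=
  exist _ (cluster_of R w)
    (introT existsP (ex_intro (fun v => cluster_of R w == cluster_of R v) w (eqxx _))).

Lemma mem_cluster_at w : w \in val (cluster_at w).
Proof. exact: cluster_of_self. Qed.

Lemma Rupset_cluster {U : set W} {C : clusters R} {w v} :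
  Rupset R U -> w \in val C -> v \in val C -> U w -> U v.
Proof.
move=> upU /clusterE -> /cluster_ofP [-> //|[wv _]] Uw; exact: upU Uw wv.
Qed.

Lemma degenerate_mem_eq {C : clusters R} {v w} :
  degenerate C -> v \in val C -> w \in val C -> v = w.
Proof.
move=> [w0 [-> Nw0]].
suff to_w0 u : u \in cluster_of R w0 -> u = w0 by move=> /to_w0 -> /to_w0.
move=> /cluster_ofP [//|[w0u uw0]]; by move: Nw0; rewrite (Rtrans _ _ _ w0u uw0).
Qed.

Lemma degenerate_irrefl {C : clusters R} {w} :
  degenerate C -> w \in val C -> ~~ R w w.
Proof.
move=> degC wC; have [w0 [C_w0 Nw0]] := degC.
have w0C : w0 \in val C by rewrite C_w0 cluster_of_self.
by rewrite (degenerate_mem_eq degC wC w0C).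
Qed.

Lemma irrefl_degenerate {C : clusters R} {w} :
  w \in val C -> ~~ R w w -> degenerate C.
Proof. by move=> wC Nw; exists w; rewrite (clusterE wC). Qed.

Lemma clR_rel {C C' : clusters R} {w v} :
  clR C C' -> w \in val C -> v \in val C' -> R w v.
Proof.
move=> /existsP[x /andP[xC /existsP[y /andP[yC' xy]]]].
rewrite (clusterE xC) (clusterE yC') => /cluster_ofP wx /cluster_ofP vy.
have wy : R w y by case: wx => [->|[_ wx]] //; apply: (Rtrans x).
by case: vy => [->|[yv _]] //; apply: (Rtrans y).
Qed.

Lemma rel_clRup {C C' : clusters R} {w v} :
  C != C' -> w \in val C -> v \in val C' -> R w v -> clRup C C'.
Proof.
move=> neqCC' wC vC' wv; apply/andP; split.
  by apply/existsP; exists w; rewrite wC; apply/existsP; exists v; rewrite vC'.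
apply/negP => /clR_rel /(_ vC' wC) vw.
have vC : v \in val C by rewrite (clusterE wC); apply/cluster_ofP; auto.
by move: neqCC'; rewrite (cluster_unique vC vC') eqxx.
Qed.

End Clusters.

Lemma open_all_or_nothing (T : topologicalType) (S : set T) :
  (forall x y, S x -> S y) -> open S.
Proof.
move=> allS; have [[x Sx]|noS] := pselect (exists x, S x).
  suff -> : S = setT by exact: openT.
  by apply/seteqP; split=> // y _; apply: allS Sx.
suff -> : S = set0 by exact: open0.
by apply/seteqP; split=> // y Sy; apply: noS; exists y.
Qed.

Lemma limit_point_continuous_inj {T U : topologicalType} {g : T -> U}
    (E : set T) (F : set U) x :
  continuous g -> injective g -> E `<=` g @^-1` F ->
  limit_point E x -> limit_point F (g x).
Proof.
move=> g_cont g_inj EF xE V /(g_cont x) /xE [y [yx Ey Vgy]].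
by exists (g y); split; rewrite ?(inj_eq g_inj) //; apply: EF.
Qed.

Section XFTopology.
Context {W : finType} {R : rel W} {X : clusters R -> topologicalType}.

Lemma continuous_existT (C : clusters R) :
  continuous (existT _ C : X C -> XF_type X).
Proof. by apply/continuousP => O oO; have [] := oO C. Qed.

Lemma open_XF_up (O : set (XF_type X)) (C C' : clusters R) x x' :
  open O -> O (existT _ C x) -> clRup C C' -> O (existT _ C' x').
Proof. by move=> oO Ox CC'; have [_] := oO C; apply => //; exists x. Qed.

End XFTopology.

Section Labelling.
Context {W : finType} {R : rel W}.
Hypothesis Rtrans : transitive R.
Context {X : clusters R -> topologicalType}.
Variable lab : forall C : clusters R, X C -> W.
Hypothesis lab_in : forall (C : clusters R) (x : X C), lab C x \in val C.
Hypothesis deg_one_point : forall C : clusters R, degenerate C ->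
  (exists x : X C, True) /\ (forall x y : X C, x = y).
Hypothesis nondeg_partition : forall C : clusters R, ~ degenerate C ->
  forall w, w \in val C ->
    let cell := [set x : X C | lab C x = w] in
    [/\ cell !=set0, closure cell = setT & cell `<=` limit_point cell].

Definition label (p : XF_type X) : W := lab (projT1 p) (projT2 p).

Lemma exists_lab {C : clusters R} {v} : v \in val C -> exists x : X C, lab C x = v.
Proof.
move=> vC; have [degC|ndegC] := pselect (degenerate C).
  have [[x _] _] := deg_one_point _ degC.
  by exists x; exact: (degenerate_mem_eq Rtrans degC (lab_in _ x) vC).
by have [[x]] := nondeg_partition _ ndegC _ vC; exists x.
Qed.

Lemma label_surj w : exists p, label p = w.
Proof.
by have [x labx] := exists_lab (mem_cluster_at w); exists (existT _ (cluster_at w) x).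
Qed.

Lemma open_label_preimage (U : set W) : Rupset R U -> open (label @^-1` U).
Proof.
move=> upU; change (XF_open (label @^-1` U)) => C; split.
  by apply: open_all_or_nothing => x y; apply: Rupset_cluster upU (lab_in _ x) (lab_in _ y).
move=> [x Ux] C' /andP[CC' _] x'.
exact: (upU _ _ Ux (clR_rel Rtrans CC' (lab_in _ x) (lab_in _ x'))).
Qed.

Lemma Rupset_label_image (O : set (XF_type X)) : open O -> Rupset R (label @` O).
Proof.
move=> oO _ v [[C x] Ox <-] /= xv.
have [C_v|neqC] := eqVneq C (cluster_at v); last first.
  have [x' labx'] := exists_lab (mem_cluster_at v).
  exists (existT _ (cluster_at v) x') => //; apply: open_XF_up oO Ox _.
  exact: (rel_clRup Rtrans neqC (lab_in _ x) (mem_cluster_at v) xv).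
have vC : v \in val C by rewrite C_v mem_cluster_at.
have ndegC : ~ degenerate C.
  move=> degC; move: (degenerate_irrefl Rtrans degC vC).
  by rewrite -{1}(degenerate_mem_eq Rtrans degC (lab_in _ x) vC) xv.
have [_ dense_v _] := nondeg_partition _ ndegC _ vC.
have Ox_nbhs : nbhs x ((existT _ C : X C -> XF_type X) @^-1` O).
  by apply: continuous_existT; apply: open_nbhs_nbhs.
have : closure [set y : X C | lab C y = v] x by rewrite dense_v.
by move=> /(_ _ Ox_nbhs) [y [laby Oy]]; exists (existT _ C y).
Qed.

Lemma label_fibre_crowded w :
  R w w -> label @^-1` [set w] `<=` limit_point (label @^-1` [set w]).
Proof.
move=> ww [C x] /= labx.
have wC : w \in val C by rewrite -labx lab_in.
have ndegC : ~ degenerate C by move=> /(degenerate_irrefl Rtrans)/(_ wC)/negP; apply.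
have [_ _ crowded] := nondeg_partition _ ndegC _ wC.
apply: (limit_point_continuous_inj [set y | lab C y = w] _ _
  (continuous_existT C) (@eq_from_Tagged _ _ C)) => //.
exact: crowded.
Qed.

Lemma label_fibre_irrefl_eq {w p q} :
  ~~ R w w -> label p = w -> label q = w -> p = q.
Proof.
case: p q => [C x] [C' x'] /= Nw labx labx'.
have wC : w \in val C by rewrite -labx lab_in.
have wC' : w \in val C' by rewrite -labx' lab_in.
move: x' labx'; rewrite -(cluster_unique Rtrans wC wC') => x' _.
have [_ single] := deg_one_point _ (irrefl_degenerate Rtrans wC Nw).
by rewrite (single x x').
Qed.

Lemma label_fibre_isolated w : ~~ R w w ->
  label @^-1` [set w] `&` limit_point (label @^-1` [set w]) = set0.
Proof.
move=> Nw; apply/seteqP; split => // p [labp /(_ setT filterT) [q [qp labq _]]].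
by move: qp; rewrite (label_fibre_irrefl_eq Nw labq labp) eqxx.
Qed.

End Labelling.

Theorem lemma3 (W : finType) (R : rel W) (Rtrans : transitive R)
  (X : clusters R -> topologicalType)
  (lab : forall C : clusters R, X C -> W)
  (lab_in : forall (C : clusters R) (x : X C), lab C x \in val C)
  (deg_one_point : forall C : clusters R, degenerate C ->
      (exists x : X C, True) /\ (forall x y : X C, x = y))
  (nondeg_partition : forall C : clusters R, ~ degenerate C ->
      forall w, w \in val C ->
        let cell := [set x : X C | lab C x = w] in
        [/\ cell !=set0, closure cell = setT & cell `<=` limit_point cell]) :
  let f := fun p : XF_type X => lab (projT1 p) (projT2 p) in
  d_morphism R f /\ (forall w : W, exists p, f p = w).
Proof.
split; last exact: (label_surj Rtrans lab lab_in deg_one_point nondeg_partition).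
split.
- exact: (open_label_preimage Rtrans lab lab_in).
- exact: (Rupset_label_image Rtrans lab lab_in deg_one_point nondeg_partition).
- exact: (label_fibre_crowded Rtrans lab lab_in nondeg_partition).
- exact: (label_fibre_isolated Rtrans lab lab_in deg_one_point).
Qed.
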